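(* Let $n \ge 2$ be an integer, $\lambda > 0$ a real number and $C \ge 1$. There exists a constant $C'>0$ depending only on $n$ and $C$ such that the following hold. (i) Let $\xi$ be a real number with $C^{-1} \le |\xi| \le C$, and let $(p_0,\ldots,p_n) \in \mathbb{Z}^{n+1}$ with $q := p_0 \ge 1$ and $|q\xi^i - p_i| \le C q^{-\lambda}$ for $i = 1,\ldots,n$. Then $|p_i\xi - p_{i+1}| \le C' q^{-\lambda}$ for all $i\in\{0,\ldots,n-1\}$, and $|p_{i-1}p_{i+1} - p_i^2| \le C' q^{1-\lambda}$ for all $i \in \{1,\ldots,n-1\}$. (ii) Conversely, let $(p_0,\ldots,p_n) \in \mathbb{Z}^{n+1}$ with $q := p_0 \ge 1$, $C^{-1} q \le |p_i| \le C q$ for all $i \in \{0,\ldots,n\}$, and $|p_{i-1}p_{i+1} - p_i^2| \le C q^{1-\lambda}$ for all $i \in \{1,\ldots,n-1\}$. Then there exists a real number $\xi$ with $|q\xi^i - p_i| \le C' q^{-\lambda}$ for $i = 1,\ldots,n$.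
   Context: The paper writes these statements with Vinogradov notation ($\ll$, $\asymp$ with implied constants depending on the fixed data); here the implied constants are made explicit. *)

From Stdlib Require Import Reals ZArith.
Open Scope R_scope.

Definition rpow (q s : R) : R := Rpower q s.

(* Write e_j = q xi^j - p_j.  For (i), p_i xi - p_(i+1) = e_(i+1) - xi e_i, and
   substituting p_j = q xi^j - e_j into p_(i-1) p_(i+1) - p_i^2 cancels the terms
   of order q^2 (as xi^(i-1) xi^(i+1) = xi^(2i)), leaving terms of size q^(1-lambda).
   For (ii), consecutive ratios satisfy
   p_(k+1)/p_k - p_k/p_(k-1) = (p_(k-1) p_(k+1) - p_k^2) / (p_(k-1) p_k) = O(q^(-1-lambda)),
   so with xi = p_1/q every |p_k xi - p_(k+1)| is O(q^(-lambda)), and the recursion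
   e_(k+1) = xi e_k + (p_k xi - p_(k+1)) propagates this bound to every e_k. *)

From Stdlib Require Import Reals ZArith Lra Lia.
Open Scope R_scope.

Lemma Rabs_minus_le x y : Rabs (x - y) <= Rabs x + Rabs y.
Proof. unfold Rminus; rewrite <- (Rabs_Ropp y); apply Rabs_triang. Qed.

Lemma Rabs_mult_le x y a b : Rabs x <= a -> Rabs y <= b -> Rabs (x * y) <= a * b.
Proof. intros; rewrite Rabs_mult; apply Rmult_le_compat; auto using Rabs_pos. Qed.

Lemma Rpower_opp_bounds q l : 1 <= q -> 0 <= l -> 0 < Rpower q (- l) <= 1.
Proof.
  intros Hq Hl; split; [apply exp_pos|].
  rewrite <- (Rpower_O q) by lra; apply Rle_Rpower; lra.
Qed.

Lemma Rpower_1_minus q l : 0 < q -> Rpower q (1 - l) = q * Rpower q (- l).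
Proof. intros Hq; unfold Rminus; rewrite Rpower_plus, Rpower_1 by exact Hq; reflexivity. Qed.

Section PowerApproximation.

Variable P : nat -> R.

Definition hankel_minor i := P i * P (S (S i)) - P (S i) * P (S i).

Lemma ratio_step_eq i : P i <> 0 -> P (S i) <> 0 ->
  P (S (S i)) / P (S i) - P (S i) / P i = hankel_minor i / (P i * P (S i)).
Proof. intros; unfold hankel_minor; field; auto. Qed.

Lemma ratio_drift n m D :
  0 < m ->
  (forall i, (i <= n)%nat -> m <= Rabs (P i)) ->
  (forall i, (S (S i) <= n)%nat -> Rabs (hankel_minor i) <= D) ->
  forall k, (S k <= n)%nat ->
  Rabs (P (S k) / P k - P 1%nat / P 0%nat) <= INR k * (D / (m * m)).
Proof.
  intros Hm Hlow Hminor k; induction k as [|k IH]; intros Hk.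
  - rewrite Rminus_diag, Rabs_R0; simpl; lra.
  - specialize (IH ltac:(lia)).
    assert (Hk0 := Hlow k ltac:(lia)); assert (Hk1 := Hlow (S k) ltac:(lia)).
    assert (Hstep : Rabs (P (S (S k)) / P (S k) - P (S k) / P k) <= D / (m * m)).
    { rewrite ratio_step_eq by (intro E; rewrite E, Rabs_R0 in *; lra).
      unfold Rdiv; rewrite Rabs_mult, Rabs_inv, Rabs_mult.
      apply Rmult_le_compat.
      - apply Rabs_pos.
      - left; apply Rinv_0_lt_compat; nra.
      - apply Hminor; lia.
      - apply Rinv_le_contravar; [nra|apply Rmult_le_compat; lra]. }
    replace (P (S (S k)) / P (S k) - P 1%nat / P 0%nat)
      with ((P (S (S k)) / P (S k) - P (S k) / P k) + (P (S k) / P k - P 1%nat / P 0%nat))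
      by ring.
    eapply Rle_trans; [apply Rabs_triang|].
    rewrite S_INR; lra.
Qed.

Variable X : R.

Definition power_error j := P 0%nat * X ^ j - P j.

Lemma power_error_0 : power_error 0 = 0.
Proof. unfold power_error; simpl; ring. Qed.

Lemma step_eq_power_error i :
  P i * X - P (S i) = power_error (S i) - X * power_error i.
Proof. unfold power_error; simpl; ring. Qed.

Lemma hankel_minor_eq_power_error i :
  hankel_minor i =
  P 0%nat * (2 * X ^ S i * power_error (S i) - X ^ i * power_error (S (S i))
             - X ^ S (S i) * power_error i)
  + (power_error i * power_error (S (S i)) - power_error (S i) * power_error (S i)).
Proof. unfold hankel_minor, power_error; simpl; ring. Qed.

Lemma step_le_power_error E i :
  Rabs (power_error i) <= E -> Rabs (power_error (S i)) <= E ->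
  Rabs (P i * X - P (S i)) <= (1 + Rabs X) * E.
Proof.
  intros Hi HSi; rewrite step_eq_power_error.
  eapply Rle_trans; [apply Rabs_minus_le|].
  pose proof (Rabs_mult_le _ _ _ _ (Rle_refl (Rabs X)) Hi); lra.
Qed.

Lemma hankel_minor_le_power_error E i :
  0 <= P 0%nat ->
  Rabs (power_error i) <= E -> Rabs (power_error (S i)) <= E ->
  Rabs (power_error (S (S i))) <= E ->
  Rabs (hankel_minor i) <= P 0%nat * (Rabs X ^ i * (1 + Rabs X) ^ 2) * E + 2 * E ^ 2.
Proof.
  intros HQ H0 H1 H2; rewrite hankel_minor_eq_power_error.
  eapply Rle_trans; [apply Rabs_triang|].
  apply Rplus_le_compat.
  - rewrite Rabs_mult, (Rabs_right (P 0%nat)), (Rmult_assoc (P 0%nat) (_ * _) E) by lra.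
    apply Rmult_le_compat_l; [lra|].
    eapply Rle_trans; [apply Rabs_minus_le|].
    eapply Rle_trans; [apply Rplus_le_compat_r, Rabs_minus_le|].
    rewrite !Rabs_mult, <- !RPow_abs, (Rabs_right 2) by lra; simpl.
    assert (Hb := Rabs_pos X); assert (Ha := pow_le _ i Hb).
    set (b := Rabs X) in *; set (a := b ^ i) in *.
    assert (0 <= a * b) by nra.
    assert (0 <= a * b * b) by nra.
    nra.
  - eapply Rle_trans; [apply Rabs_minus_le|].
    rewrite !Rabs_mult.
    assert (Hx := Rabs_pos (power_error i)); assert (Hy := Rabs_pos (power_error (S i))).
    nra.
Qed.

Lemma step_eq_ratio k : P k <> 0 ->
  Rabs (P k * X - P (S k)) = Rabs (P k) * Rabs (P (S k) / P k - X).
Proof.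
  intros Hk; rewrite <- Rabs_mult, <- Rabs_Ropp; f_equal; field; exact Hk.
Qed.

Lemma power_error_le_steps n K B :
  1 <= K -> Rabs X <= K ->
  (forall k, (k < n)%nat -> Rabs (P k * X - P (S k)) <= B) ->
  forall k, (k <= n)%nat -> Rabs (power_error k) <= INR k * K ^ k * B.
Proof.
  intros HK HX Hstep k; induction k as [|k IH]; intros Hk.
  - rewrite power_error_0, Rabs_R0; simpl; lra.
  - specialize (IH ltac:(lia)); specialize (Hstep k ltac:(lia)).
    assert (HB : 0 <= B) by (eapply Rle_trans; [apply Rabs_pos|exact Hstep]).
    assert (HKk : 1 <= K ^ k) by (apply pow_R1_Rle; lra).
    assert (Hk0 := pos_INR k).
    replace (power_error (S k)) with (X * power_error k + (P k * X - P (S k)))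
      by (rewrite step_eq_power_error; ring).
    eapply Rle_trans; [apply Rabs_triang|].
    pose proof (Rabs_mult_le _ _ _ _ HX IH).
    rewrite S_INR; simpl.
    assert (0 <= INR k * K ^ k * B) by (apply Rmult_le_pos; [apply Rmult_le_pos|]; lra).
    assert (B <= K * K ^ k * B) by (rewrite <- (Rmult_1_l B) at 1; apply Rmult_le_compat_r; nra).
    nra.
Qed.

End PowerApproximation.

Lemma power_approx_consequences P X n C a :
  1 <= C -> 1 <= P 0%nat -> 0 < a <= 1 -> Rabs X <= C ->
  (forall i, (1 <= i <= n)%nat -> Rabs (power_error P X i) <= C * a) ->
  (forall i, (i < n)%nat -> Rabs (P i * X - P (S i)) <= (1 + C) * C * a) /\
  (forall i, (S (S i) <= n)%nat ->
     Rabs (hankel_minor P i) <= ((1 + C) ^ n * C + 2 * C ^ 2) * (P 0%nat * a)).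
Proof.
  intros HC HQ Ha HX Herr.
  assert (Herr' : forall j, (j <= n)%nat -> Rabs (power_error P X j) <= C * a).
  { intros [|j] Hj; [rewrite power_error_0, Rabs_R0; nra | apply Herr; lia]. }
  split.
  - intros i Hi.
    eapply Rle_trans; [apply step_le_power_error; apply Herr'; lia|].
    rewrite Rmult_assoc; apply Rmult_le_compat_r; nra.
  - intros i Hi.
    eapply Rle_trans; [apply hankel_minor_le_power_error; [lra|apply Herr'; lia ..]|].
    assert (Hb := Rabs_pos X).
    assert (Hpow : Rabs X ^ i * (1 + Rabs X) ^ 2 <= (1 + C) ^ n).
    { apply Rle_trans with ((1 + Rabs X) ^ (i + 2)).
      - rewrite pow_add; apply Rmult_le_compat_r; [apply pow_le; lra|].
        apply pow_incr; lra.
      - apply Rle_trans with ((1 + C) ^ (i + 2)); [apply pow_incr; lra|].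
        apply Rle_pow; [lra|lia]. }
    assert (0 <= Rabs X ^ i * (1 + Rabs X) ^ 2)
      by (apply Rmult_le_pos; apply pow_le; lra).
    assert (P 0%nat * (Rabs X ^ i * (1 + Rabs X) ^ 2) * (C * a)
            <= (1 + C) ^ n * C * (P 0%nat * a)).
    { replace ((1 + C) ^ n * C * (P 0%nat * a)) with (P 0%nat * (1 + C) ^ n * (C * a)) by ring.
      apply Rmult_le_compat_r; [nra|]. apply Rmult_le_compat_l; lra. }
    assert (a * a <= P 0%nat * a) by nra.
    nra.
Qed.

Lemma power_approx_of_minors P n C D :
  (1 <= n)%nat -> 1 <= C -> 0 < P 0%nat -> 0 <= D ->
  (forall i, (i <= n)%nat -> / C * P 0%nat <= Rabs (P i) <= C * P 0%nat) ->
  (forall i, (S (S i) <= n)%nat -> Rabs (hankel_minor P i) <= D) ->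
  forall k, (k <= n)%nat ->
  Rabs (power_error P (P 1%nat / P 0%nat) k) <= INR n ^ 2 * C ^ (n + 3) * (D / P 0%nat).
Proof.
  intros Hn HC HQ HD Hbound Hminor.
  set (X := P 1%nat / P 0%nat).
  assert (Hm : 0 < / C * P 0%nat) by (apply Rmult_lt_0_compat; [apply Rinv_0_lt_compat|]; lra).
  assert (HX : Rabs X <= C).
  { unfold X, Rdiv; rewrite Rabs_mult, Rabs_inv, (Rabs_right (P 0%nat)) by lra.
    destruct (Hbound 1%nat Hn) as [_ H1].
    apply Rmult_le_reg_r with (P 0%nat); [lra|].
    rewrite Rmult_assoc, Rinv_l by lra; lra. }
  assert (HnI := pos_INR n).
  assert (Hstep : forall k, (k < n)%nat ->
            Rabs (P k * X - P (S k)) <= INR n * C ^ 3 * (D / P 0%nat)).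
  { intros k Hk.
    destruct (Hbound k ltac:(lia)) as [Hlow Hup].
    rewrite step_eq_ratio by (intro E; rewrite E, Rabs_R0 in Hlow; lra).
    eapply Rle_trans.
    { apply Rmult_le_compat; [apply Rabs_pos|apply Rabs_pos|exact Hup|].
      apply (ratio_drift P n (/ C * P 0%nat) D Hm); [apply Hbound|exact Hminor|lia]. }
    replace (C * P 0%nat * (INR k * (D / (/ C * P 0%nat * (/ C * P 0%nat)))))
      with (INR k * C ^ 3 * (D / P 0%nat)) by (field; lra).
    apply Rmult_le_compat_r; [apply Rmult_le_pos; [lra|left; apply Rinv_0_lt_compat; lra]|].
    apply Rmult_le_compat_r; [apply pow_le; lra|].
    apply le_INR; lia. }
  intros k Hk.
  eapply Rle_trans; [apply (power_error_le_steps P X n C _ HC HX Hstep k Hk)|].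
  assert (0 <= INR n * C ^ 3 * (D / P 0%nat)).
  { apply Rmult_le_pos; [apply Rmult_le_pos; [lra|apply pow_le; lra]|].
    apply Rmult_le_pos; [lra|left; apply Rinv_0_lt_compat; lra]. }
  replace (INR n ^ 2 * C ^ (n + 3) * (D / P 0%nat))
    with (INR n * C ^ n * (INR n * C ^ 3 * (D / P 0%nat))) by (rewrite pow_add; ring).
  apply Rmult_le_compat_r; [assumption|].
  apply Rmult_le_compat; [apply pos_INR|apply pow_le; lra|apply le_INR; lia|].
  apply Rle_pow; [lra|lia].
Qed.

Lemma IZR_hankel_minor_pred (p : nat -> Z) i :
  IZR (p (S i - 1)%nat * p (S (S i)) - p (S i) * p (S i))%Z
  = hankel_minor (fun j => IZR (p j)) i.
Proof. rewrite minus_IZR, !mult_IZR, Nat.sub_succ, Nat.sub_0_r; reflexivity. Qed.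

Theorem proposition4p1 (n : nat) (C : R) :
  (2 <= n)%nat -> 1 <= C ->
  exists C' : R, 0 < C' /\
  forall lambda : R, 0 < lambda ->
  (* (i) *)
  (forall (xi : R) (p : nat -> Z),
     / C <= Rabs xi <= C ->
     (1 <= p 0%nat)%Z ->
     (forall i : nat, (1 <= i <= n)%nat ->
        Rabs (IZR (p 0%nat) * xi ^ i - IZR (p i))
          <= C * rpow (IZR (p 0%nat)) (- lambda)) ->
     (forall i : nat, (i <= n - 1)%nat ->
        Rabs (IZR (p i) * xi - IZR (p (S i)))
          <= C' * rpow (IZR (p 0%nat)) (- lambda)) /\
     (forall i : nat, (1 <= i <= n - 1)%nat ->
        Rabs (IZR (p (i - 1)%nat * p (S i) - p i * p i)%Z)
          <= C' * rpow (IZR (p 0%nat)) (1 - lambda)))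
  /\
  (* (ii) *)
  (forall p : nat -> Z,
     (1 <= p 0%nat)%Z ->
     (forall i : nat, (i <= n)%nat ->
        / C * IZR (p 0%nat) <= Rabs (IZR (p i)) <= C * IZR (p 0%nat)) ->
     (forall i : nat, (1 <= i <= n - 1)%nat ->
        Rabs (IZR (p (i - 1)%nat * p (S i) - p i * p i)%Z)
          <= C * rpow (IZR (p 0%nat)) (1 - lambda)) ->
     exists xi : R,
       forall i : nat, (1 <= i <= n)%nat ->
         Rabs (IZR (p 0%nat) * xi ^ i - IZR (p i))
           <= C' * rpow (IZR (p 0%nat)) (- lambda)).
Proof.
  intros Hn HC.
  set (K1 := (1 + C) * C); set (K2 := (1 + C) ^ n * C + 2 * C ^ 2);
    set (K3 := INR n ^ 2 * C ^ (n + 4)).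
  assert (0 < K1 /\ 0 <= K2 /\ 0 <= K3) as (HK1 & HK2 & HK3).
  { assert (0 <= (1 + C) ^ n * C) by (apply Rmult_le_pos; [apply pow_le|]; lra).
    assert (0 <= C ^ 2) by (apply pow_le; lra).
    assert (0 <= INR n ^ 2 * C ^ (n + 4))
      by (apply Rmult_le_pos; apply pow_le; [apply pos_INR|lra]).
    unfold K1, K2, K3; repeat split; [nra|lra|lra]. }
  exists (K1 + K2 + K3); split; [lra|].
  intros lambda Hlambda.
  split.
  -
    intros xi p [_ Hxi] Hp0 Herr.
    assert (Hq : 1 <= IZR (p 0%nat)) by (apply IZR_le; lia).
    assert (Ha := Rpower_opp_bounds _ lambda Hq ltac:(lra)); unfold rpow in *.
    destruct (power_approx_consequences (fun i => IZR (p i)) xi n C _ HC Hq Ha Hxi Herr)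
      as [Hstep Hminor]; fold K1 K2 in Hstep, Hminor.
    split.
    + intros i Hi; eapply Rle_trans; [apply Hstep; lia|].
      apply Rmult_le_compat_r; lra.
    + intros [|i] Hi; [lia|].
      rewrite Rpower_1_minus, IZR_hankel_minor_pred by lra.
      eapply Rle_trans; [apply Hminor; lia|].
      apply Rmult_le_compat_r; [nra|lra].
  - intros p Hp0 Hbound Hminor.
    assert (Hq : 1 <= IZR (p 0%nat)) by (apply IZR_le; lia).
    assert (Ha := Rpower_opp_bounds _ lambda Hq ltac:(lra)); unfold rpow in *.
    exists (IZR (p 1%nat) / IZR (p 0%nat)); intros k Hk.
    eapply Rle_trans.
    { apply (power_approx_of_minors (fun i => IZR (p i)) n C
               (C * (IZR (p 0%nat) * Rpower (IZR (p 0%nat)) (- lambda))));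
        [lia|lra|lra|apply Rmult_le_pos; [lra|apply Rmult_le_pos; lra]|exact Hbound| |lia].
      intros i Hi; rewrite <- IZR_hankel_minor_pred, <- Rpower_1_minus by lra.
      apply Hminor; lia. }
    apply Rle_trans with (K3 * Rpower (IZR (p 0%nat)) (- lambda)).
    + right; unfold K3; rewrite !pow_add; field; lra.
    + apply Rmult_le_compat_r; lra.
Qed.
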